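(* There is a representation (unital $\mathbb C$-algebra homomorphism) $\overline{\mathcal H}\to\operatorname{Mat}_{2D}(\mathbb C)$ such that $\mathcal T\mapsto\mathfrak t$, $\mathcal T'\mapsto\mathfrak t'$, $\mathcal U\mapsto\mathfrak u$, $\mathcal U'\mapsto\mathfrak u'$, $\mathcal X\mapsto\mathfrak x$.
   Context: Let $q$ be a prime power, $D\ge3$ an integer and $e\in\{0,\tfrac12,1,\tfrac32,2\}$ (with $q$ a square when $e\in\{\tfrac12,\tfrac32\}$). Let $\kappa=q^{-e/2}$ and $\kappa'=\sqrt{-1}\,q^{-D/2}$. The nil-DAHA $\overline{\mathcal H}=\overline{\mathcal H}(\kappa,\kappa')$ is the $\mathbb C$-algebra generated by $\mathcal T^{\pm1},\mathcal U,\mathcal X^{\pm1}$ (with $\mathcal T\mathcal T^{-1}=\mathcal T^{-1}\mathcal T=1$, $\mathcal X\mathcal X^{-1}=\mathcal X^{-1}\mathcal X=1$) subject to $(\mathcal T-\kappa)(\mathcal T+\kappa^{-1})=0$, $(\mathcal T'-\kappa')(\mathcal T'+\kappa'^{-1})=0$, $\mathcal U(\mathcal U+1)=0$, $\mathcal U'^2=0$, where $\mathcal T'=\mathcal X\mathcal T^{-1}$ and $\mathcal U'=\mathcal X^{-1}(\mathcal U+1)$. Define $2\times2$ matrices: for $0\le i\le D-1$, $t(i)=\begin{pmatrix} q^{-e/2}-q^{e/2} & q^{e/2}\\ q^{-e/2}&0\end{pmatrix}$, $u'(i)=\begin{pmatrix}0&0\\ -\sqrt{-1}\,q^{(D-e)/2-i}&0\end{pmatrix}$;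 for $1\le i\le D-1$, $t'(i)=\sqrt{-1}\begin{pmatrix} q^{-D/2}(q^D-q^i+1) & q^{D/2}(q^{i-D}-1)\\ q^{-D/2}(1-q^i) & q^{i-D/2}\end{pmatrix}$, $u(i)=\begin{pmatrix}-1&1-q^{D-i}\\0&0\end{pmatrix}$; and $1\times1$ matrices $t'(0)=t'(D)=(\sqrt{-1}\,q^{-D/2})$, $u(0)=(0)$, $u(D)=(-1)$. Let $\mathfrak t=\operatorname{blockdiag}(t(0),\dots,t(D-1))$, $\mathfrak t'=\operatorname{blockdiag}(t'(0),\dots,t'(D))$, $\mathfrak u=\operatorname{blockdiag}(u(0),\dots,u(D))$, $\mathfrak u'=\operatorname{blockdiag}(u'(0),\dots,u'(D-1))$, all $2D\times2D$, and $\mathfrak x=\mathfrak t'\mathfrak t$. *)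

From HB Require Import structures.
From mathcomp Require Import all_boot all_order all_algebra.
Set Implicit Arguments. Unset Strict Implicit. Unset Printing Implicit Defensive.
Import Order.TTheory GRing.Theory Num.Theory.
Local Open Scope ring_scope.

(* Conventions: the field of complex numbers is modelled by an arbitrary
   numClosedFieldType C ('i is sqrt(-1)).  The parameter e in {0,1/2,1,3/2,2}
   is encoded as m = 2e in {0,1,2,3,4}.  All fractional powers of q are
   expressed via the positive real fourth root r = q^(1/4):
   qp q z = q^(z/4) for z : int. *)

Definition qr (C : numClosedFieldType) (q : nat) : C := 4.-root (q%:R : C).
Definition qp (C : numClosedFieldType) (q : nat) (z : int) : C := qr C q ^ z.

(* kappa = q^{-e/2} = q^{-m/4};  kappa' = sqrt(-1) q^{-D/2} *)
Definition kappa (C : numClosedFieldType) (q m : nat) : C := qp C q (- (m%:Z)).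
Definition kappa' (C : numClosedFieldType) (q D : nat) : C :=
  'i * qp C q (- (2 * D)%:Z).

(* Block diagonal matrices written out entrywise.
   even_blk f: blocks of size 2 occupying rows/cols {2i, 2i+1}, i = 0..D-1;
     entry (a,b) = f (a/2) (local row) (local col), local index = parity.
   odd_blk f: blocks 0 = {0} (1x1), i = {2i-1, 2i} for 1<=i<=D-1, D = {2D-1}
     (1x1); i.e. shift indices by one. The 1x1 block 0 corresponds to local
     index (true,true), block D to local index (false,false). *)
Definition even_blk (C : numClosedFieldType) (D : nat)
  (f : nat -> bool -> bool -> C) : 'M[C]_(2 * D) :=
  \matrix_(a < 2 * D, b < 2 * D)
    if (a : nat)./2 == (b : nat)./2 then f (a : nat)./2 (odd a) (odd b) else 0.

Definition odd_blk (C : numClosedFieldType) (D : nat)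
  (f : nat -> bool -> bool -> C) : 'M[C]_(2 * D) :=
  \matrix_(a < 2 * D, b < 2 * D)
    if (a : nat).+1./2 == (b : nat).+1./2
    then f (a : nat).+1./2 (odd (a : nat).+1) (odd (b : nat).+1) else 0.

(* t(i) = [[q^{-e/2}-q^{e/2}, q^{e/2}],[q^{-e/2}, 0]] *)
Definition t_blk (C : numClosedFieldType) (q m : nat) (i : nat) (r c : bool) : C :=
  match r, c with
  | false, false => qp C q (- (m%:Z)) - qp C q (m%:Z)
  | false, true => qp C q (m%:Z)
  | true, false => qp C q (- (m%:Z))
  | true, true => 0
  end.

(* u'(i) = [[0,0],[-sqrt(-1) q^{(D-e)/2 - i}, 0]] *)
Definition u'_blk (C : numClosedFieldType) (q D m : nat) (i : nat) (r c : bool) : C :=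
  match r, c with
  | true, false => - 'i * qp C q ((2 * D)%:Z - m%:Z - (4 * i)%:Z)
  | _, _ => 0
  end.

(* t'(0) = t'(D) = (sqrt(-1) q^{-D/2}); for 1 <= i <= D-1,
   t'(i) = sqrt(-1) [[q^{-D/2}(q^D-q^i+1), q^{D/2}(q^{i-D}-1)],
                     [q^{-D/2}(1-q^i),     q^{i-D/2}]] *)
Definition t'_blk (C : numClosedFieldType) (q D : nat) (i : nat) (r c : bool) : C :=
  let Q : C := q%:R in
  if i == 0%N then (if r && c then 'i * qp C q (- (2 * D)%:Z) else 0)
  else if i == D then (if ~~ r && ~~ c then 'i * qp C q (- (2 * D)%:Z) else 0)
  else match r, c with
  | false, false => 'i * (qp C q (- (2 * D)%:Z) * (Q ^+ D - Q ^+ i + 1))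
  | false, true => 'i * (qp C q ((2 * D)%:Z) * (Q ^ (i%:Z - D%:Z) - 1))
  | true, false => 'i * (qp C q (- (2 * D)%:Z) * (1 - Q ^+ i))
  | true, true => 'i * qp C q ((4 * i)%:Z - (2 * D)%:Z)
  end.

(* u(0) = (0), u(D) = (-1); for 1 <= i <= D-1, u(i) = [[-1, 1-q^{D-i}],[0,0]] *)
Definition u_blk (C : numClosedFieldType) (q D : nat) (i : nat) (r c : bool) : C :=
  let Q : C := q%:R in
  if i == 0%N then 0
  else if i == D then (if ~~ r && ~~ c then -1 else 0)
  else match r, c with
  | false, false => -1
  | false, true => 1 - Q ^+ (D - i)
  | _, _ => 0
  end.

Definition tmat (C : numClosedFieldType) (q D m : nat) : 'M[C]_(2 * D) :=
  even_blk D (t_blk C q m).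
Definition u'mat (C : numClosedFieldType) (q D m : nat) : 'M[C]_(2 * D) :=
  even_blk D (u'_blk C q D m).
Definition t'mat (C : numClosedFieldType) (q D : nat) : 'M[C]_(2 * D) :=
  odd_blk D (t'_blk C q D).
Definition umat (C : numClosedFieldType) (q D : nat) : 'M[C]_(2 * D) :=
  odd_blk D (u_blk C q D).
Definition xmat (C : numClosedFieldType) (q D m : nat) : 'M[C]_(2 * D) :=
  t'mat C q D *m tmat C q D m.

(* A unital algebra homomorphism from the nil-DAHA H(k,k') (presented by
   generators T^{±1}, U, X^{±1} and relations) to Mat_n(C) is, by definition
   of a presented algebra, the same as a choice of images T, Ti, U, X, Xi of
   the generators T, T^{-1}, U, X, X^{-1} satisfying the defining relations. *)
Definition nilDAHA_rep (C : numClosedFieldType) (n : nat) (k k' : C)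
  (T Ti U X Xi : 'M[C]_n) : Prop :=
  let T' := X *m Ti in
  let U' := Xi *m (U + 1%:M) in
  T *m Ti = 1%:M /\ Ti *m T = 1%:M /\ X *m Xi = 1%:M /\ Xi *m X = 1%:M /\
  (T - k%:M) *m (T + k^-1%:M) = 0 /\
  (T' - k'%:M) *m (T' + k'^-1%:M) = 0 /\
  U *m (U + 1%:M) = 0 /\
  U' *m U' = 0.

From mathcomp Require Import all_boot all_order all_algebra.
From mathcomp Require Import ring zify.
Set Implicit Arguments.
Unset Strict Implicit.
Unset Printing Implicit Defensive.
Import GRing.Theory Num.Theory.
Local Open Scope ring_scope.

(* All five matrices are block diagonal, t and u' for the partition of
   {0..2D-1} into the pairs {2i, 2i+1}, t' and u for the shifted partition
   {0}, {2i-1, 2i}, {2D-1}.  Each relation among matrices of the same shape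
   is thus checked block by block, on 2x2 (or 1x1) matrices whose entries are
   Laurent polynomials in r = q^(1/4) and sqrt(-1); e.g. every 2x2 block of t
   (resp. t') has trace k - k^-1 and determinant -1 for k = kappa
   (resp. kappa'), whence the quadratic relation by Cayley-Hamilton.
   The relation (T - k)(T + k^-1) = 0 makes T invertible with inverse
   T + (k^-1 - k), and similarly for T', so X = T'T is invertible; the only
   relation mixing the two shapes is U + 1 = T' T U', which gives
   X^-1 (U + 1) = U'. *)

Section BlockDiagonal.
Variables (R : pzRingType) (n : nat) (blk : 'I_n -> nat) (pos : 'I_n -> bool).
Implicit Types f g : nat -> bool -> bool -> R.

Definition blkmx f : 'M[R]_n :=
  \matrix_(a, b) if blk a == blk b then f (blk a) (pos a) (pos b) else 0.

(* Blocks may be incomplete: position s of block i need not be occupied. *)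
Definition blk_occurs i s := [exists a, (blk a == i) && (pos a == s)].

Lemma blkmxD f g : blkmx f + blkmx g = blkmx (fun i r c => f i r c + g i r c).
Proof. by apply/matrixP => a b; rewrite !mxE; case: eqP; rewrite ?addr0. Qed.

Lemma blkmxN f : - blkmx f = blkmx (fun i r c => - f i r c).
Proof. by apply/matrixP => a b; rewrite !mxE; case: eqP; rewrite ?oppr0. Qed.

Lemma eq_blkmx f g :
    (forall i r c, blk_occurs i r -> blk_occurs i c -> f i r c = g i r c) ->
  blkmx f = blkmx g.
Proof.
move=> fg; apply/matrixP => a b; rewrite !mxE; case: eqP => // ab.
by apply: fg; apply/existsP; [exists a | exists b]; rewrite ?ab !eqxx.
Qed.

Lemma blkmx_eq0 f :
  (forall i r c, blk_occurs i r -> blk_occurs i c -> f i r c = 0) ->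
  blkmx f = 0.
Proof. by move/eq_blkmx->; apply/matrixP => a b; rewrite !mxE; case: ifP. Qed.

Lemma big_blk_occurs i (F : bool -> R) :
  \sum_(s | blk_occurs i s) F s =
  (if blk_occurs i false then F false else 0) +
  (if blk_occurs i true then F true else 0).
Proof. by rewrite big_mkcond big_bool addrC. Qed.

Lemma mul_blkmx_diag s f d :
  blkmx f *m diag_mx (\row_a if pos a == s then d (blk a) else 0) =
  blkmx (fun i r c => if c == s then f i r s * d i else 0).
Proof.
apply/matrixP => a b; rewrite mul_mx_diag !mxE.
case: eqP => [->|_]; last by rewrite mul0r.
by case: eqP => [->|_]; rewrite ?mulr0.
Qed.

Hypothesis blk_pos_inj : forall a b, blk a = blk b -> pos a = pos b -> a = b.

Lemma scalar_blkmx x : x%:M = blkmx (fun _ r c => if r == c then x else 0).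
Proof.
apply/matrixP => a b; rewrite !mxE.
have [->|ab] := eqVneq a b; first by rewrite !eqxx.
by case: eqP => // eblk; case: eqP => // epos; case/eqP: ab; apply: blk_pos_inj.
Qed.

Lemma blkmx_diag s d :
  blkmx (fun i r c => if (r == s) && (c == s) then d i else 0) =
  diag_mx (\row_a if pos a == s then d (blk a) else 0).
Proof.
apply/matrixP => a b; rewrite !mxE.
have [<-|ab] := eqVneq a b; first by rewrite !eqxx /=; case: eqP.
case: eqP => // eblk; case: eqP => // epos; case: eqP => // epos'.
by case/eqP: ab; apply: blk_pos_inj; rewrite // epos epos'.
Qed.

Lemma mul_blkmx f g : blkmx f *m blkmx g =
  blkmx (fun i r c => \sum_(s | blk_occurs i s) f i r s * g i s c).
Proof.
apply/matrixP => a b; rewrite !mxE; case: eqP => [ab|nab]; last first.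
  rewrite big1 // => j _; rewrite !mxE.
  case: eqP => [aj|]; last by rewrite mul0r.
  by case: eqP => [jb|]; [case: nab; rewrite aj jb | rewrite mulr0].
rewrite (bigID (fun j => blk j == blk a)) /= [X in _ + X]big1 ?addr0 => [|j].
  rewrite (partition_big pos predT) //= [RHS]big_mkcond.
  apply: eq_bigr => s _.
  case: ifPn => [/existsP[a0 /andP[/eqP ha0 /eqP pa0]]|none].
    rewrite (big_pred1 a0) => [|j]; first by rewrite !mxE ha0 -ab pa0 !eqxx.
    apply/andP/eqP => [[/eqP ja /eqP js]|->]; last by rewrite ha0 pa0.
    by apply: blk_pos_inj; rewrite ?ha0 ?pa0.
  rewrite big_pred0 // => j; apply: contraNF none => jas.
  by apply/existsP; exists j.
by move/negbTE => ja; rewrite !mxE eq_sym ja mul0r.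
Qed.
End BlockDiagonal.

Section Shapes.
Variable D : nat.

Definition even_idx (a : 'I_(2 * D)) := (a : nat)./2.
Definition even_pos (a : 'I_(2 * D)) := odd a.
Definition odd_idx (a : 'I_(2 * D)) := (a : nat).+1./2.
Definition odd_pos (a : 'I_(2 * D)) := odd (a : nat).+1.

Lemma even_blkE (C : numClosedFieldType) f :
  even_blk D f = blkmx even_idx even_pos f :> 'M[C]_(2 * D).
Proof. by []. Qed.

Lemma odd_blkE (C : numClosedFieldType) f :
  odd_blk D f = blkmx odd_idx odd_pos f :> 'M[C]_(2 * D).
Proof. by []. Qed.

Lemma even_idx_pos_inj a b :
  even_idx a = even_idx b -> even_pos a = even_pos b -> a = b.
Proof. by rewrite /even_idx /even_pos => ? ?; apply/val_inj => /=; lia. Qed.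

Lemma odd_idx_pos_inj a b :
  odd_idx a = odd_idx b -> odd_pos a = odd_pos b -> a = b.
Proof. by rewrite /odd_idx /odd_pos => ? ?; apply/val_inj => /=; lia. Qed.

Lemma even_occurs i s : blk_occurs even_idx even_pos i s = (i < D)%N.
Proof.
apply/existsP/idP => [[a /andP[/eqP <- _]]|iD].
  by rewrite /even_idx; have := ltn_ord a; lia.
have a_lt : (i.*2 + s < 2 * D)%N by lia.
exists (Ordinal a_lt); rewrite /even_idx /even_pos /=.
by apply/andP; split; apply/eqP; lia.
Qed.

Lemma odd_occurs i s :
  blk_occurs odd_idx odd_pos i s = if s then (i < D)%N else (0 < i <= D)%N.
Proof.
apply/existsP/idP => [[a /andP[/eqP <- /eqP <-]]|iD].
  by rewrite /odd_idx /odd_pos; have := ltn_ord a; case: ifP; lia.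
have a_lt : ((i.*2 + s).-1 < 2 * D)%N by case: s iD; lia.
exists (Ordinal a_lt); rewrite /odd_idx /odd_pos /=.
by apply/andP; split; apply/eqP; move: iD; case: (s); lia.
Qed.

Lemma even_to_odd_diag (R : pzRingType) (d : nat -> R) :
  \row_a (if even_pos a == false then d (even_idx a) else 0) =
  \row_a (if odd_pos a == true then d (odd_idx a) else 0) :> 'rV_(2 * D).
Proof.
apply/rowP => a; rewrite !mxE /even_pos /odd_pos /even_idx /odd_idx /=.
by rewrite uphalf_half; case: (odd a).
Qed.
End Shapes.

Lemma exprz_subn (F : fieldType) (x : F) a b :
  x != 0 -> x ^ (a%:Z - b%:Z) = x ^+ a / x ^+ b.
Proof. by move=> x_neq0; rewrite expfzDr // -exprnN. Qed.

Lemma quadratic_mx_inv (F : fieldType) n (A : 'M[F]_n) (a : F) : a != 0 ->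
    (A - a%:M) *m (A + a^-1%:M) = 0 ->
  let B := A + (a^-1 - a)%:M in A *m B = 1%:M /\ B *m A = 1%:M.
Proof.
move=> a_neq0 hA B.
have AB : A *m B = 1%:M.
  apply: subr0_eq; rewrite -hA mulmxBl !mulmxDr !mul_mx_scalar mul_scalar_mx.
  by rewrite scale_scalar_mx mulVf // scalerBl opprD !addrA.
by split; rewrite // -AB /B mulmxDl mulmxDr mul_scalar_mx mul_mx_scalar.
Qed.

Section Generators.
Variables (C : numClosedFieldType) (q : nat).
Hypothesis q_gt0 : (0 < q)%N.
Local Notation r := (qr C q).

Lemma natr_qr : q%:R = r ^+ 4.
Proof. by rewrite /qr rootCK. Qed.

Lemma qr_neq0 : r != 0.
Proof. by rewrite /qr rootC_eq0 // pnatr_eq0 -lt0n. Qed.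

Lemma expr_qr_neq0 k : r ^+ k != 0.
Proof. by rewrite expf_neq0 ?qr_neq0. Qed.

Lemma qp_nat k : qp C q k%:Z = r ^+ k.
Proof. by []. Qed.

Lemma qpN k : qp C q (- k%:Z) = (r ^+ k)^-1.
Proof. by rewrite /qp -exprnN. Qed.

Lemma qp_subn a b : qp C q (a%:Z - b%:Z) = r ^+ a / r ^+ b.
Proof. by rewrite /qp exprz_subn ?qr_neq0. Qed.

Variable D : nat.

Lemma kappa'E : kappa' C q D = 'i / r ^+ (2 * D).
Proof. by rewrite /kappa' qpN. Qed.

Lemma t'_blk_mid i x y : (0 < i < D)%N ->
  t'_blk C q D i x y =
    let R := r ^+ (2 * D) in let P := r ^+ (4 * i) in
    'i * match x, y with
         | false, false => (R ^+ 2 - P + 1) / R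
         | false, true => R * (P / R ^+ 2 - 1)
         | true, false => (1 - P) / R
         | true, true => P / R
         end.
Proof.
case/andP => i_gt0 iD; rewrite /t'_blk gtn_eqF // ltn_eqF //= natr_qr.
have Rsq : r ^+ (4 * D) = r ^+ (2 * D) ^+ 2 by rewrite -exprM mulnAC.
have r4_neq0 : r ^+ 4 != 0 by rewrite expr_qr_neq0.
by case: x; case: y; rewrite /= ?qpN ?qp_subn ?exprz_subn //
  -?[r ^+ 4 ^+ _]exprM ?Rsq // [_^-1 * _]mulrC.
Qed.

Lemma u_blk_mid i x y : (0 < i < D)%N ->
  u_blk C q D i x y =
    match x, y with
    | false, false => -1
    | false, true => 1 - r ^+ (2 * D) ^+ 2 / r ^+ (4 * i)
    | _, _ => 0
    end.
Proof.
case/andP => i_gt0 iD; rewrite /u_blk gtn_eqF // ltn_eqF //= natr_qr.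
have Rsq : r ^+ (4 * D) = r ^+ (2 * D) ^+ 2 by rewrite -exprM mulnAC.
by rewrite -exprM mulnBr expfB ?ltn_pmul2l // Rsq.
Qed.

Lemma u'_blkE m i x y : u'_blk C q D m i x y =
  if x && ~~ y then - 'i * (r ^+ (2 * D) / (r ^+ m * r ^+ (4 * i))) else 0.
Proof.
by rewrite /u'_blk -addrA -opprD -PoszD qp_subn exprD; case: x; case: y.
Qed.

Lemma tmat_quadratic m :
  (tmat C q D m - (kappa C q m)%:M) *m (tmat C q D m + (kappa C q m)^-1%:M)
  = 0.
Proof.
rewrite /tmat even_blkE !(scalar_blkmx (@even_idx_pos_inj D)) blkmxN !blkmxD.
rewrite (mul_blkmx (@even_idx_pos_inj D)).
apply: blkmx_eq0 => i x y; rewrite !even_occurs big_blk_occurs !even_occurs.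
move=> -> _; rewrite /kappa.
case: x; case: y; rewrite /= !qpN ?qp_nat ?invrK //.
all: by field; rewrite expr_qr_neq0.
Qed.

Lemma t'mat_quadratic :
  (t'mat C q D - (kappa' C q D)%:M) *m (t'mat C q D + (kappa' C q D)^-1%:M)
  = 0.
Proof.
rewrite /t'mat odd_blkE !(scalar_blkmx (@odd_idx_pos_inj D)) blkmxN !blkmxD.
rewrite (mul_blkmx (@odd_idx_pos_inj D)).
apply: blkmx_eq0 => i x y; rewrite !odd_occurs big_blk_occurs !odd_occurs.
move=> hx hy; rewrite kappa'E.
have i2 : 'i ^+ 2 = -1 :> C := sqrCi C.
have [i0 | i_gt0] := posnP i.
  move: hx hy; rewrite i0 /t'_blk /= qpN; case: x; case: y => //= D_gt0 _.
  by rewrite D_gt0; field: i2; rewrite expr_qr_neq0 neq0Ci.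
have [iD | iD] := eqVneq i D.
  subst i; move: hx hy; rewrite ltnn /t'_blk gtn_eqF // eqxx qpN.
  by case: x; case: y => //= _ _; rewrite leqnn subrr !mul0r addr0.
have mid : (0 < i < D)%N by move: hx iD; case: (x); lia.
have /andP[_ ltiD] := mid.
rewrite !(t'_blk_mid _ _ mid) /= ltiD (ltnW ltiD).
by case: (x); case: (y) => /=; field: i2; rewrite ?expr_qr_neq0 ?neq0Ci.
Qed.

Lemma umat_quadratic : umat C q D *m (umat C q D + 1%:M) = 0.
Proof.
rewrite /umat odd_blkE (scalar_blkmx (@odd_idx_pos_inj D)) blkmxD.
rewrite (mul_blkmx (@odd_idx_pos_inj D)).
apply: blkmx_eq0 => i x y; rewrite !odd_occurs big_blk_occurs !odd_occurs.
move=> hx hy; have [i0 | i_gt0] := posnP i.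
  by rewrite i0 /u_blk /= !mul0r; case: ifP; rewrite addr0.
have [iD | iD] := eqVneq i D.
  subst i; move: hx hy; rewrite ltnn /u_blk gtn_eqF // eqxx.
  by case: x; case: y => //= _ _; rewrite leqnn; ring.
have mid : (0 < i < D)%N by move: hx iD; case: (x); lia.
have /andP[_ ltiD] := mid.
rewrite !(u_blk_mid _ _ mid) ltiD (ltnW ltiD).
by case: (x); case: (y) => /=; ring.
Qed.

Lemma u'mat_sqr_eq0 m : u'mat C q D m *m u'mat C q D m = 0.
Proof.
rewrite /u'mat even_blkE (mul_blkmx (@even_idx_pos_inj D)).
apply: blkmx_eq0 => i x y _ _; rewrite big1 // => s _.
by rewrite /u'_blk; case: x; case: s; case: y; rewrite ?mulr0 ?mul0r.
Qed.

Lemma mul_tmat_u'mat m : tmat C q D m *m u'mat C q D m =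
  diag_mx (\row_a if odd_pos a == true then
                     - 'i * (r ^+ (2 * D) / r ^+ (4 * odd_idx a)) else 0).
Proof.
pose d k := - 'i * (r ^+ (2 * D) / r ^+ (4 * k)).
rewrite -(even_to_odd_diag D d) -(blkmx_diag (@even_idx_pos_inj D)).
rewrite /tmat /u'mat even_blkE (mul_blkmx (@even_idx_pos_inj D)).
apply: eq_blkmx => i x y; rewrite !even_occurs big_blk_occurs !even_occurs.
move=> -> _; case: x; case: y;
  rewrite /t_blk !u'_blkE /d /= ?mulr0 ?mul0r ?add0r ?qp_nat //.
by field; rewrite !expr_qr_neq0.
Qed.

Lemma umatD1E m :
  umat C q D + 1%:M = t'mat C q D *m (tmat C q D m *m u'mat C q D m).
Proof.
pose d k := - 'i * (r ^+ (2 * D) / r ^+ (4 * k)).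
rewrite mul_tmat_u'mat /t'mat odd_blkE (mul_blkmx_diag _ _ _ _ d).
rewrite /umat odd_blkE (scalar_blkmx (@odd_idx_pos_inj D)) blkmxD.
apply: eq_blkmx => i x y; rewrite !odd_occurs /d => hx hy.
have i2 : 'i ^+ 2 = -1 :> C := sqrCi C.
have [i0 | i_gt0] := posnP i.
  move: hx hy; rewrite i0 /u_blk /t'_blk /= qpN; case: x; case: y => //= _ _.
  by field: i2; rewrite ?expr_qr_neq0 ?neq0Ci.
have [iD | iD] := eqVneq i D.
  subst i; move: hx hy; rewrite ltnn /u_blk gtn_eqF // eqxx.
  by case: x; case: y => //= _ _; rewrite addNr.
have mid : (0 < i < D)%N by move: hx iD; case: (x); lia.
rewrite (u_blk_mid _ _ mid) !(t'_blk_mid _ _ mid) /=.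
by case: (x); case: (y) => /=; field: i2; rewrite ?expr_qr_neq0 ?neq0Ci.
Qed.
End Generators.

Lemma nilDAHA_rep_of_relations (C : numClosedFieldType) n (k k' : C)
    (T T' U U' : 'M[C]_n) :
    k != 0 -> k' != 0 ->
    (T - k%:M) *m (T + k^-1%:M) = 0 -> (T' - k'%:M) *m (T' + k'^-1%:M) = 0 ->
    U *m (U + 1%:M) = 0 -> U' *m U' = 0 -> U + 1%:M = T' *m (T *m U') ->
  exists Ti Xi, nilDAHA_rep k k' T Ti U (T' *m T) Xi
    /\ T' *m T *m Ti = T' /\ Xi *m (U + 1%:M) = U'.
Proof.
move=> k_neq0 k'_neq0 hT hT' hU hU' U1E.
have [TTi TiT] := quadratic_mx_inv k_neq0 hT.
have [T'T'i T'iT'] := quadratic_mx_inv k'_neq0 hT'.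
move: TTi TiT T'T'i T'iT'; set Ti := T + _; set T'i := T' + _.
move=> TTi TiT T'T'i T'iT'.
have XTi : T' *m T *m Ti = T' by rewrite -mulmxA TTi mulmx1.
have XiU : Ti *m T'i *m (U + 1%:M) = U'.
  by rewrite U1E !mulmxA -(mulmxA Ti) T'iT' mulmx1 TiT mul1mx.
exists Ti, (Ti *m T'i); rewrite /nilDAHA_rep /= XTi XiU; do !split => //.
- by rewrite -mulmxA (mulmxA T) TTi mul1mx T'T'i.
- by rewrite -mulmxA (mulmxA T'i) T'iT' mul1mx TiT.
Qed.

Theorem proposition8p7 (C : numClosedFieldType) (p k D m : nat) :
  prime p -> (0 < k)%N -> (3 <= D)%N -> (m <= 4)%N ->
  (odd m -> exists s : nat, (p ^ k = s ^ 2)%N) ->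
  exists Ti Xi : 'M[C]_(2 * D),
    nilDAHA_rep (kappa C (p ^ k) m) (kappa' C (p ^ k) D)
      (tmat C (p ^ k) D m) Ti (umat C (p ^ k) D) (xmat C (p ^ k) D m) Xi
    /\ xmat C (p ^ k) D m *m Ti = t'mat C (p ^ k) D
    /\ Xi *m (umat C (p ^ k) D + 1%:M) = u'mat C (p ^ k) D m.
Proof.
move=> p_prime _ _ _ _.
have q_gt0 : (0 < p ^ k)%N by rewrite expn_gt0 prime_gt0.
apply: nilDAHA_rep_of_relations.
- by rewrite /kappa qpN invr_eq0 expr_qr_neq0.
- by rewrite kappa'E mulf_neq0 ?neq0Ci ?invr_eq0 ?expr_qr_neq0.
- exact: tmat_quadratic.
- exact: t'mat_quadratic.
- exact: umat_quadratic.
- exact: u'mat_sqr_eq0.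
- exact: umatD1E.
Qed.
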